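(* If $G$ is a graph and $v\in V(G)$, then $St_{dom}(G)\le St_{dom}(G-v)+1$.
   Context: A dominated coloring of a graph is a proper coloring in which every color class is dominated by at least one vertex, i.e. for each color class $C$ there is a vertex adjacent to every vertex of $C$; $\chi_{dom}(G)$ is the minimum number of colors in a dominated coloring. The dom-stability $St_{dom}(G)$ is the minimum number of vertices of $G$ whose removal changes the dominated chromatic number of $G$. *)

(* A finite simple graph is a symmetric irreflexive relation
   e on a finType T; we work with induced subgraphs G[V] for V : {set T},
   so that vertex deletion keeps the same vertex type. *)
From mathcomp Require Import all_boot.
Set Implicit Arguments. Unset Strict Implicit. Unset Printing Implicit Defensive.

Section DomColoring.
Variables (T : finType) (e : rel T).

Definition proper_col (V : {set T}) (c : T -> nat) : Prop :=
  forall x y, x \in V -> y \in V -> e x y -> c x <> c y.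

Definition dom_coloring (V : {set T}) (k : nat) (c : T -> nat) : Prop :=
  [/\ proper_col V c,
      (forall x, x \in V -> c x < k) &
      (forall i, i < k -> (exists x, x \in V /\ c x = i) ->
         exists u, u \in V /\ (forall x, x \in V -> c x = i -> e u x))].

Definition is_chi_dom (V : {set T}) (k : nat) : Prop :=
  (exists c, dom_coloring V k c) /\
  (forall j, j < k -> ~ exists c, dom_coloring V j c).

Definition dom_changes (V X : {set T}) : Prop :=
  exists k, ~ (is_chi_dom V k <-> is_chi_dom (V :\: X) k).

Definition is_St_dom (V : {set T}) (s : nat) : Prop :=
  (exists X : {set T}, [/\ X \subset V, #|X| = s & dom_changes V X]) /\
  (forall X : {set T}, X \subset V -> dom_changes V X -> s <= #|X|).

End DomColoring.

(* Nothing specific to dominated colorings is needed.  Let X be a smallest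
   set whose removal from G - v changes chi_dom.  If removing v alone changes
   chi_dom(G), then St_dom(G) <= 1.  Otherwise chi_dom(G - v) = chi_dom(G), and
   removing X from G - v is removing X + v from G, which therefore changes
   chi_dom(G); so St_dom(G) <= |X| + 1. *)
From mathcomp Require Import all_boot.
From Stdlib Require Import Classical.

Set Implicit Arguments. Unset Strict Implicit. Unset Printing Implicit Defensive.

Lemma ex_least_nat (P : nat -> Prop) (n : nat) :
  P n -> exists m, [/\ P m, m <= n & forall k, P k -> m <= k].
Proof.
elim/ltn_ind: n => n IH Pn.
case: (classic (exists2 k, k < n & P k)) => [[k lt_kn Pk] | no_smaller].
  have [m [Pm le_mk min_m]] := IH k lt_kn Pk.
  by exists m; split=> //; apply: leq_trans le_mk (ltnW lt_kn).
exists n; split=> // k Pk; rewrite leqNgt; apply/negP=> lt_kn.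
by apply: no_smaller; exists k.
Qed.

Section DomStability.
Variables (T : finType) (e : rel T).

Lemma is_St_dom_le (V X : {set T}) :
  X \subset V -> dom_changes e V X ->
  exists s, is_St_dom e V s /\ s <= #|X|.
Proof.
move=> sub_XV changes_X.
have [s [[Y [sub_YV card_Y changes_Y]] le_s min_s]] :=
  @ex_least_nat (fun m => exists Y : {set T},
                   [/\ Y \subset V, #|Y| = m & dom_changes e V Y]) #|X|
                (ex_intro _ X (And3 sub_XV erefl changes_X)).
exists s; split=> //; split=> [|Z sub_ZV changes_Z]; first by exists Y.
by apply: min_s; exists Z.
Qed.

Lemma dom_changes_setU1 (V X : {set T}) (v : T) :
  ~ dom_changes e V [set v] -> dom_changes e (V :\ v) X ->
  dom_changes e V (v |: X).
Proof.
move=> unchanged_v [k changed_k]; exists k => iff_k; apply: changed_k.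
have same_v j : is_chi_dom e V j <-> is_chi_dom e (V :\ v) j.
  by apply: NNPP => diff_j; apply: unchanged_v; exists j.
rewrite -setDDl in iff_k.
exact: iff_trans (iff_sym (same_v k)) iff_k.
Qed.

End DomStability.

Theorem mainTheorem12 (T : finType) (e : rel T)
  (e_sym : symmetric e) (e_irr : irreflexive e) (v : T) (s : nat) :
  is_St_dom e ([set: T] :\ v) s ->
  exists s', is_St_dom e [set: T] s' /\ s' <= s + 1.
Proof.
move=> [[X [_ card_X changes_X]] _].
case: (classic (dom_changes e [set: T] [set v])) => [changes_v | unchanged_v].
  have [s' [St_s' le_s']] := is_St_dom_le (subsetT _) changes_v.
  by exists s'; split=> //; rewrite cards1 in le_s'; rewrite addn1 (leq_trans le_s').
have [s' [St_s' le_s']] :=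
  is_St_dom_le (subsetT (v |: X)) (dom_changes_setU1 unchanged_v changes_X).
exists s'; split=> //; apply: leq_trans le_s' _.
by rewrite cardsU1 card_X addnC leq_add2l leq_b1.
Qed.
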